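(* Let $s\ge 1$, $q=4^{2s}$, and let $\theta$ be the automorphism of $F_q$ given by $\theta(a)=a^{4^s}$. Let $n$ be an even positive integer and suppose $x^n-1=h(x)g(x)$ in $F_q[x;\theta]$, where the degree of $g(x)$ is even. If $g(x)$ is a palindromic polynomial, then $h(x)$ is a palindromic polynomial.
   Context: $F_q[x;\theta]$ is the skew polynomial ring: polynomials $\sum a_ix^i$ with $a_i\in F_q$, usual addition, and multiplication determined by $xa=\theta(a)x$ for $a\in F_q$. A polynomial $f(x)=a_0+a_1x+\dots+a_tx^t$ of degree $t$ is palindromic if $a_i=a_{t-i}$ for all $i\in\{0,\ldots,t\}$. *)

From HB Require Import structures.
From mathcomp Require Import all_boot all_order all_algebra all_field.
Set Implicit Arguments. Unset Strict Implicit. Unset Printing Implicit Defensive.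
Import GRing.Theory.
Local Open Scope ring_scope.

(* Skew polynomials F[x; theta] are represented by their coefficient
   polynomial in {poly F}; addition is the usual one, and multiplication
   is the skew product determined by x a = theta(a) x, i.e.
   (sum a_i x^i)(sum b_j x^j) = sum_{i,j} a_i theta^i(b_j) x^(i+j). *)
Definition skew_mul (F : ringType) (theta : F -> F) (p q : {poly F}) : {poly F} :=
  \sum_(i < size p) \sum_(j < size q) (p`_i * iter i theta q`_j) *: 'X^(i + j).

Definition palindromic (F : ringType) (p : {poly F}) : Prop :=
  forall i : nat, (i <= (size p).-1)%N -> p`_i = p`_((size p).-1 - i).

Definition frob4 (F : ringType) (s : nat) (a : F) : F := a ^+ (4 ^ s).

From HB Require Import structures.
From mathcomp Require Import all_boot all_order all_algebra all_field zify.
Set Implicit Arguments.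
Unset Strict Implicit.
Unset Printing Implicit Defensive.

Import GRing.Theory.
Local Open Scope ring_scope.

(* Write a and b for the degrees of h and g, and theta for the Frobenius map
   a |-> a^(4^s), an involution of F_q.  In the coefficient
   (hg)_k = sum_(i + j = k) h_i theta^i(g_j), substituting (i, j) by
   (a - i, b - j) and using that g is palindromic, that a = n - b is even and
   that theta is an involution shows (hg)_(a+b-k) = (h^r g)_k, where h^r is the
   reversal of h.  As x^n - 1 = x^n + 1 is palindromic in characteristic 2,
   hg = h^r g, hence (h - h^r) g = 0; skew multiplication by an injective
   theta has no zero divisors, so h = h^r. *)

Definition reversep (R : nzRingType) (p : {poly R}) : {poly R} :=
  \poly_(i < size p) p`_((size p).-1 - i).

Lemma palindromicE (R : nzRingType) (p : {poly R}) :
  palindromic p <-> reversep p = p.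
Proof.
split=> [p_pal | p_rev i le_i_deg].
  apply/polyP=> i; rewrite coef_poly.
  case: ltnP => [lt_i_size | /(nth_default 0)->] //.
  have le_i_deg : (i <= (size p).-1)%N by lia.
  by rewrite p_pal ?leq_subr // subKn.
have [-> | p_neq0] := eqVneq p 0; first by rewrite !coef0.
have lt_i_size : (i < size p)%N by move: p_neq0; rewrite -size_poly_gt0; lia.
by rewrite -{1}p_rev coef_poly lt_i_size.
Qed.

Lemma iter_involutive (T : Type) (f : T -> T) i x :
  involutive f -> iter i f x = if odd i then f x else x.
Proof. by move=> f_invol; elim: i => //= i ->; case: (odd i). Qed.

Lemma sum_ord_widen0 (V : nmodType) n m (F : 'I_m -> V) (le_nm : (n <= m)%N) :
  (forall i : 'I_m, (n <= i)%N -> F i = 0) ->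
  \sum_(i < m) F i = \sum_(i < n) F (widen_ord le_nm i).
Proof.
move=> F_eq0; rewrite -big_ord_narrow (bigID (fun i : 'I_m => (i < n)%N)) /=.
by rewrite [X in _ + X]big1 ?addr0 // => i; rewrite -leqNgt; apply: F_eq0.
Qed.

Lemma eqn_subD_rev a b i j k : (i <= a)%N -> (j <= b)%N -> (k <= a + b)%N ->
  (a - i + (b - j) == a + b - k)%N = (i + j == k)%N.
Proof. by move=> *; apply/eqP/eqP; lia. Qed.

Section SkewMul.

Variables (R : nzRingType) (theta : R -> R).
Hypothesis theta0 : theta 0 = 0.

Lemma skew_mul0p (q : {poly R}) : skew_mul theta 0 q = 0.
Proof. by rewrite /skew_mul size_poly0 big_ord0. Qed.

Lemma skew_mulp0 (p : {poly R}) : skew_mul theta p 0 = 0.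
Proof. by rewrite /skew_mul size_poly0 big1 // => i _; rewrite big_ord0. Qed.

Lemma coef_skew_mul N M (p q : {poly R}) k :
  (size p <= N)%N -> (size q <= M)%N ->
  (skew_mul theta p q)`_k =
  \sum_(i < N) \sum_(j < M) p`_i * iter i theta q`_j * ((i + j)%N == k)%:R.
Proof.
move=> le_p_N le_q_M; rewrite coef_sum (sum_ord_widen0 le_p_N); last first.
  by move=> i /(nth_default 0) p_i0; rewrite big1 // => j _; rewrite p_i0 !mul0r.
apply: eq_bigr => i _; rewrite coef_sum (sum_ord_widen0 le_q_M); last first.
  by move=> j /(nth_default 0)->; rewrite iter_fix // mulr0 mul0r.
by apply: eq_bigr => j _; rewrite coefZ coefXn eq_sym.
Qed.
Arguments coef_skew_mul {N M p q} k.

Lemma size_skew_mul N M (p q : {poly R}) :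
  (size p <= N)%N -> (size q <= M)%N ->
  (size (skew_mul theta p q) <= (N + M).-1)%N.
Proof.
move=> le_p_N le_q_M; apply/leq_sizeP=> k le_deg_k.
rewrite (coef_skew_mul k le_p_N le_q_M); apply: big1 => i _; apply: big1 => j _.
have /negPf-> : (i + j)%N != k by have := ltn_ord i; have := ltn_ord j; lia.
by rewrite mulr0.
Qed.

Lemma coef_skew_mul_top (p q : {poly R}) : p != 0 -> q != 0 ->
  (skew_mul theta p q)`_((size p).-1 + (size q).-1) =
  lead_coef p * iter (size p).-1 theta (lead_coef q).
Proof.
rewrite -!size_poly_gt0 /lead_coef (coef_skew_mul _ (leqnn _) (leqnn _)).
case: (size p) (size q) => [|a] [|b] //= _ _.
rewrite big_ord_recr big1 ?add0r /= => [|i _]; last first.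
  apply: big1 => j _.
  have /negPf-> : (i + j != a + b)%N by have := ltn_ord i; have := ltn_ord j; lia.
  by rewrite mulr0.
rewrite big_ord_recr big1 /= ?eqxx ?mulr1 ?add0r // => j _.
have /negPf-> : (a + j != a + b)%N by have := ltn_ord j; lia.
by rewrite mulr0.
Qed.

Lemma skew_mulBl (p r q : {poly R}) :
  skew_mul theta (p - r) q = skew_mul theta p q - skew_mul theta r q.
Proof.
have le_pr_N : (size (p - r)%R <= maxn (size p) (size r))%N.
  by rewrite -(size_polyN r) size_polyD.
apply/polyP=> k; rewrite coefB.
rewrite (coef_skew_mul k le_pr_N (leqnn _)).
rewrite (coef_skew_mul k (leq_maxl _ (size r)) (leqnn _)).
rewrite (coef_skew_mul k (leq_maxr (size p) _) (leqnn _)) -sumrB; apply: eq_bigr => i _.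
by rewrite -sumrB; apply: eq_bigr => j _; rewrite coefB !mulrBl.
Qed.

Hypothesis theta_invol : involutive theta.

Lemma coef_skew_mul_reversep (p q : {poly R}) k :
  ~~ odd (size p).-1 -> palindromic q -> (k <= (size p).-1 + (size q).-1)%N ->
  (skew_mul theta p q)`_((size p).-1 + (size q).-1 - k) =
  (skew_mul theta (reversep p) q)`_k.
Proof.
move=> deg_p_even q_pal le_k_deg.
rewrite (coef_skew_mul _ (leqnn (size p)) (leqnn (size q))).
rewrite (coef_skew_mul _ (size_poly (size p) _) (leqnn (size q))).
rewrite (reindex_inj rev_ord_inj); apply: eq_bigr => i _.
rewrite (reindex_inj rev_ord_inj); apply: eq_bigr => j _.
have lt_i := ltn_ord i; have lt_j := ltn_ord j.
have le_i_deg : (i <= (size p).-1)%N by lia.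
have le_j_deg : (j <= (size q).-1)%N by lia.
rewrite /= !subnS !predn_sub coef_poly lt_i -q_pal //.
rewrite !(iter_involutive _ _ theta_invol).
by rewrite oddB // (negPf deg_p_even) /= eqn_subD_rev.
Qed.

End SkewMul.

Section SkewMulDomain.

Variables (R : idomainType) (theta : R -> R).
Hypotheses (theta0 : theta 0 = 0) (theta_invol : involutive theta).

Lemma iter_invol_eq0 i (x : R) : (iter i theta x == 0) = (x == 0).
Proof.
rewrite (iter_involutive _ _ theta_invol); case: odd => //.
by apply/eqP/eqP=> [theta_x0 | ->]; rewrite -1?[x]theta_invol ?theta_x0.
Qed.

Lemma coef_skew_mul_top_neq0 (p q : {poly R}) : p != 0 -> q != 0 ->
  (skew_mul theta p q)`_((size p).-1 + (size q).-1) != 0.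
Proof.
move=> p_neq0 q_neq0.
by rewrite coef_skew_mul_top // mulf_neq0 ?iter_invol_eq0 ?lead_coef_eq0.
Qed.

Lemma deg_skew_mul (p q : {poly R}) : p != 0 -> q != 0 ->
  (size (skew_mul theta p q)).-1 = ((size p).-1 + (size q).-1)%N.
Proof.
move=> p_neq0 q_neq0.
have lt_top : ((size p).-1 + (size q).-1 < size (skew_mul theta p q))%N.
  rewrite ltnNge; apply: contra (coef_skew_mul_top_neq0 p_neq0 q_neq0).
  by move=> /(nth_default 0)->.
have := size_skew_mul theta0 (leqnn (size p)) (leqnn (size q)).
by move: lt_top p_neq0 q_neq0; rewrite -!size_poly_gt0; lia.
Qed.

Lemma skew_mul_eq0 (p q : {poly R}) :
  q != 0 -> skew_mul theta p q = 0 -> p = 0.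
Proof.
move=> q_neq0 pq0; apply/eqP/contraT => p_neq0.
by have := coef_skew_mul_top_neq0 p_neq0 q_neq0; rewrite pq0 coef0 eqxx.
Qed.

Theorem palindromic_skew_factor (p q : {poly R}) :
  q != 0 -> ~~ odd (size p).-1 -> palindromic q ->
  palindromic (skew_mul theta p q) -> palindromic p.
Proof.
move=> q_neq0 deg_p_even q_pal pq_pal.
have [-> | p_neq0] := eqVneq p 0; first by move=> i _; rewrite !coef0.
apply/palindromicE/esym/subr0_eq/(skew_mul_eq0 q_neq0).
rewrite skew_mulBl //; apply/eqP; rewrite subr_eq0; apply/eqP/polyP=> k.
have [le_k_deg | lt_deg_k] := leqP k ((size p).-1 + (size q).-1).
  by rewrite -coef_skew_mul_reversep // pq_pal deg_skew_mul.
have size_skew_le_k (r : {poly R}) :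
    (size r <= size p)%N -> (size (skew_mul theta r q) <= k)%N.
  move=> le_r_p; apply: leq_trans (size_skew_mul theta0 le_r_p (leqnn (size q))) _.
  by move: lt_deg_k; lia.
by rewrite !nth_default ?size_skew_le_k ?size_poly.
Qed.

End SkewMulDomain.

Lemma palindromic_Xn_sub_1 (R : nzRingType) n :
  2 \in [pchar R] -> (0 < n)%N -> palindromic ('X^n - 1 : {poly R}).
Proof.
move=> pchar2 n_gt0 i; rewrite -polyC1 size_XnsubC //= polyC1 => le_i_n.
rewrite !coefB !coefXn !coef1 !oppr_pchar2 // addrC.
have -> : (n - i == n)%N = (i == 0)%N by apply/eqP/eqP; lia.
by have -> : (n - i == 0)%N = (i == n)%N by apply/eqP/eqP; lia.
Qed.

Lemma frob4_involutive (F : finFieldType) s :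
  #|F| = (4 ^ (2 * s))%N -> involutive (frob4 (F := F) s).
Proof.
by move=> cardF x; rewrite /frob4 -exprM -expnD addnn -mul2n -cardF expf_card.
Qed.

Theorem corollary1 (s : nat) (F : finFieldType) (n : nat) (h g : {poly F}) :
  (1 <= s)%N ->
  #|F| = (4 ^ (2 * s))%N ->
  (0 < n)%N -> ~~ odd n ->
  'X^n - 1 = skew_mul (frob4 (F := F) s) h g ->
  ~~ odd (size g).-1 ->
  palindromic g -> palindromic h.
Proof.
(* [1 <= s] is redundant: a field has at least two elements. *)
move=> _ cardF n_gt0 n_even Xn1E deg_g_even g_pal.
have theta0 : frob4 s (0 : F) = 0 by rewrite /frob4 expr0n expn_eq0.
have theta_invol := frob4_involutive cardF.
have pchar2 : 2 \in [pchar F].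
  by apply: (@card_finPcharP _ 2 (4 * s)); rewrite // cardF !expnM.
have Xn1_neq0 : 'X^n - 1 != 0 :> {poly F} by rewrite -size_poly_gt0 -polyC1 size_XnsubC.
have g_neq0 : g != 0 by apply: contraNneq Xn1_neq0 => g0; rewrite Xn1E g0 skew_mulp0.
have h_neq0 : h != 0 by apply: contraNneq Xn1_neq0 => h0; rewrite Xn1E h0 skew_mul0p.
have deg_h_even : ~~ odd (size h).-1.
  have := deg_skew_mul theta0 theta_invol h_neq0 g_neq0.
  rewrite -Xn1E -polyC1 size_XnsubC //= => n_eq.
  by move: n_even; rewrite n_eq oddD (negPf deg_g_even) addbF.
apply: (palindromic_skew_factor theta0 theta_invol g_neq0 deg_h_even g_pal).
by rewrite -Xn1E; apply: palindromic_Xn_sub_1.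
Qed.
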